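(* Let $N\to\infty$, $p=p(N)$ with $p(1-p)N\to\infty$, and $S=S(N)$, $T=T(N)$ such that $N-S$ and $N+S-T$ are nonnegative integers, $pS/(p(1-p)N)^{1/2}\to\infty$, $pS=o((p(1-p)N)^{2/3})$, and $T=o(N)$. Let $Z_1\sim B(N-S,p)$ and $Z_2\sim B(N+S-T,p)$ be independent. Then for all sufficiently large $N$, $$\mathbb{P}(Z_1=Z_2+pT)<\frac{S}{2\pi(1-p)N}\exp\!\left(-\frac{2pS^2}{(1-p)(2N-T)}+o(1)\right)+\frac{3}{\pi pS}\exp\!\left(-\frac{9pS^2}{8(1-p)N}\right),$$ where $o(1)\to0$ as $N\to\infty$.
   Context: $B(n,p)$ denotes a binomial random variable with parameters $n$ and $p$. *)

From Stdlib Require Import Reals.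
Open Scope R_scope.

Definition binom_pmf (n : nat) (p : R) (k : nat) : R :=
  if Nat.leb k n then C n k * p ^ k * (1 - p) ^ (n - k) else 0.

(* P(Z1 = Z2 + c) for independent Z1 ~ B(n1,p), Z2 ~ B(n2,p):
   sum of the joint pmf over all pairs (k, j) with k = j + c. *)
Definition prob_diff_eq (n1 n2 : nat) (p c : R) : R :=
  sum_f_R0 (fun j =>
    sum_f_R0 (fun k =>
      if Req_EM_T (INR k) (INR j + c)
      then binom_pmf n1 p k * binom_pmf n2 p j else 0) n1) n2.

From Stdlib Require Import Reals Lra Lia Psatz ZArith.
From Coquelicot Require Import Hierarchy Derive AutoDerive.
Open Scope R_scope.

(* Chernoff bound by exponential tilting.  Put [V = p(1-p)(2N-T)] and [t = 2pS/V].
   Reweighting [Z1] by [e^(tk)] and [Z2] by [e^(-tj)] leaves the event [Z1 = Z2 + pT]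
   invariant up to the factor [e^(-tpT)], so its probability is at most
   [e^(-tpT) M(t)^(N-S) M(-t)^(N+S-T)] (with [M] the Bernoulli mgf) times the largest
   point mass of a tilted binomial, which is [O(1 / sd(Z1))].  The bound
   [M(+-t) <= exp(+-pt + p(1-p)(t^2/2 + t^3))] turns the exponent into
   [-2p^2S^2/V + 8(pS)^3/V^2], and the last term is the [o(1)] because
   [pS = o(v^(2/3))], [v = p(1-p)N].  Finally [pS >> sqrt v] makes [O(1 / sd(Z1))]
   smaller than [S / (2 pi (1-p) N)], so the second term of the bound is only needed
   through its positivity. *)

Lemma Rle_of_is_derive_nonneg (f f' : R -> R) a b : a <= b ->
  (forall c, a <= c <= b -> is_derive f c (f' c)) ->
  (forall c, a <= c <= b -> 0 <= f' c) -> f a <= f b.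
Proof.
  intros Hab Hd Hpos. destruct (Req_dec a b) as [<-|Hne]; [lra|].
  destruct (MVT_cor2 f f' a b) as [c [Hc Hcab]]; [lra| |].
  - intros c Hc. apply is_derive_Reals, Hd, Hc.
  - assert (0 <= f' c) by (apply Hpos; lra). nra.
Qed.

Lemma exp_le_lin x : 0 <= x <= 1 -> exp x <= 1 + 6 * x.
Proof.
  intros Hx.
  enough (1 + 6 * 0 - exp 0 <= 1 + 6 * x - exp x) by (rewrite exp_0 in H; lra).
  apply (Rle_of_is_derive_nonneg (fun y => 1 + 6 * y - exp y) (fun y => 6 - exp y));
    [lra| |].
  - intros c _. auto_derive; [easy|ring].
  - intros c Hc. pose proof exp_le_3. pose proof (exp_increasing c 1).
    destruct (Req_dec c 1) as [->|]; lra.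
Qed.

Lemma exp_le_quad x : 0 <= x <= 1 -> exp x <= 1 + x + 3 * x ^ 2.
Proof.
  intros Hx.
  enough (1 + 0 + 3 * 0 ^ 2 - exp 0 <= 1 + x + 3 * x ^ 2 - exp x)
    by (rewrite exp_0 in H; lra).
  apply (Rle_of_is_derive_nonneg (fun y => 1 + y + 3 * y ^ 2 - exp y)
           (fun y => 1 + 6 * y - exp y)); [lra| |].
  - intros c _. auto_derive; [easy|ring].
  - intros c Hc. pose proof (exp_le_lin c ltac:(lra)). lra.
Qed.

Lemma exp_le_cubic x : 0 <= x <= 1 -> exp x <= 1 + x + x ^ 2 / 2 + x ^ 3.
Proof.
  intros Hx.
  enough (1 + 0 + 0 ^ 2 / 2 + 0 ^ 3 - exp 0 <= 1 + x + x ^ 2 / 2 + x ^ 3 - exp x)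
    by (rewrite exp_0 in H; lra).
  apply (Rle_of_is_derive_nonneg (fun y => 1 + y + y ^ 2 / 2 + y ^ 3 - exp y)
           (fun y => 1 + y + 3 * y ^ 2 - exp y)); [lra| |].
  - intros c _. auto_derive; [easy|field].
  - intros c Hc. pose proof (exp_le_quad c ltac:(lra)). lra.
Qed.

Lemma exp_le_quad_nonpos x : x <= 0 -> exp x <= 1 + x + x ^ 2 / 2.
Proof.
  intros Hx.
  enough (1 + - 0 + (- 0) ^ 2 / 2 - exp (- 0) <= 1 + - - x + (- - x) ^ 2 / 2 - exp (- - x))
    by (rewrite Ropp_involutive, Ropp_0, exp_0 in H; lra).
  apply (Rle_of_is_derive_nonneg (fun y => 1 + - y + (- y) ^ 2 / 2 - exp (- y))
           (fun y => exp (- y) - 1 + y)); [lra| |].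
  - intros c _. auto_derive; [easy|field].
  - intros c _. pose proof (exp_ineq1_le (- c)). lra.
Qed.

(* Centring at the mean: [(1-p) + p e^t = e^(pt) ((1-p) e^(-pt) + p e^((1-p)t))],
   and the bracket is [1 + p(1-p) t^2/2 + O(t^3)]. *)
Lemma bernoulli_mgf_le p t : 0 <= p <= 1 -> 0 <= t <= 1 ->
  (1 - p) + p * exp t <= exp (p * t + p * (1 - p) * (t ^ 2 / 2 + t ^ 3)).
Proof.
  intros Hp Ht. set (a := p * (1 - p) * (t ^ 2 / 2 + t ^ 3)).
  assert (Hcentre : (1 - p) + p * exp t
          = exp (p * t) * ((1 - p) * exp (- (p * t)) + p * exp ((1 - p) * t))).
  { rewrite Rmult_plus_distr_l, <- !Rmult_assoc, !(Rmult_comm (exp (p * t))),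
      !Rmult_assoc, <- !exp_plus.
    replace (p * t + - (p * t)) with 0 by ring.
    replace (p * t + (1 - p) * t) with t by ring. rewrite exp_0. ring. }
  rewrite Hcentre, exp_plus. apply Rmult_le_compat_l; [left; apply exp_pos|].
  assert (Hneg : exp (- (p * t)) <= 1 + - (p * t) + (- (p * t)) ^ 2 / 2)
    by (apply exp_le_quad_nonpos; nra).
  assert (Hpos : exp ((1 - p) * t)
                 <= 1 + (1 - p) * t + ((1 - p) * t) ^ 2 / 2 + ((1 - p) * t) ^ 3)
    by (apply exp_le_cubic; nra).
  assert (Hcube : p * (1 - p) ^ 3 * t ^ 3 <= p * (1 - p) * t ^ 3).
  { assert (0 <= p * (1 - p) * t ^ 3) by (apply Rmult_le_pos; [nra|apply pow_le; lra]).
    replace (p * (1 - p) ^ 3 * t ^ 3) with ((1 - p) ^ 2 * (p * (1 - p) * t ^ 3)) by ring.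
    assert ((1 - p) ^ 2 <= 1) by nra. nra. }
  pose proof (exp_ineq1_le a).
  apply Rle_trans with ((1 - p) * (1 + - (p * t) + (- (p * t)) ^ 2 / 2)
    + p * (1 + (1 - p) * t + ((1 - p) * t) ^ 2 / 2 + ((1 - p) * t) ^ 3)).
  - apply Rplus_le_compat; apply Rmult_le_compat_l; lra.
  - unfold a in *. nra.
Qed.

Lemma bernoulli_mgf_opp_le p t : 0 <= p <= 1 -> 0 <= t <= 1 ->
  (1 - p) + p * exp (- t) <= exp (- (p * t) + p * (1 - p) * (t ^ 2 / 2 + t ^ 3)).
Proof.
  intros Hp Ht.
  pose proof (bernoulli_mgf_le (1 - p) t ltac:(lra) Ht) as H.
  replace ((1 - p) + p * exp (- t)) with (exp (- t) * ((1 - (1 - p)) + (1 - p) * exp t)).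
  - replace (- (p * t) + p * (1 - p) * (t ^ 2 / 2 + t ^ 3))
      with (- t + ((1 - p) * t + (1 - p) * (1 - (1 - p)) * (t ^ 2 / 2 + t ^ 3))) by ring.
    rewrite exp_plus. apply Rmult_le_compat_l; [left; apply exp_pos | exact H].
  - rewrite Rmult_plus_distr_l, <- Rmult_assoc, (Rmult_comm (exp (- t)) (1 - p)),
      Rmult_assoc, <- exp_plus, Rplus_opp_l, exp_0. ring.
Qed.

Lemma C_pos n k : 0 < C n k.
Proof.
  unfold C. apply Rdiv_lt_0_compat; [apply INR_fact_lt_0|].
  apply Rmult_lt_0_compat; apply INR_fact_lt_0.
Qed.

Lemma binom_pmf_nonneg n r k : 0 <= r <= 1 -> 0 <= binom_pmf n r k.
Proof.
  intros Hr. unfold binom_pmf. destruct (Nat.leb k n); [|lra].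
  apply Rmult_le_pos; [apply Rmult_le_pos|]; try (apply pow_le; lra).
  left; apply C_pos.
Qed.

Lemma binom_pmf_sum n r : sum_f_R0 (binom_pmf n r) n = 1.
Proof.
  rewrite <- (pow1 n). replace 1 with (r + (1 - r)) by ring. rewrite binomial.
  apply sum_eq. intros i Hi. unfold binom_pmf.
  replace (Nat.leb i n) with true by (symmetry; apply Nat.leb_le; lia). reflexivity.
Qed.

Lemma binom_pmf_sym n r k : (k <= n)%nat -> binom_pmf n r k = binom_pmf n (1 - r) (n - k).
Proof.
  intros Hk. unfold binom_pmf.
  replace (Nat.leb k n) with true by (symmetry; apply Nat.leb_le; lia).
  replace (Nat.leb (n - k) n) with true by (symmetry; apply Nat.leb_le; lia).
  rewrite (pascal_step1 n k Hk). replace (n - (n - k))%nat with k by lia.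
  replace (1 - (1 - r)) with r by ring. ring.
Qed.

Lemma binom_pmf_succ_ratio n r i : (i < n)%nat ->
  binom_pmf n r i * (INR (n - i) * r) = binom_pmf n r (S i) * (INR (S i) * (1 - r)).
Proof.
  intros Hi. unfold binom_pmf.
  replace (Nat.leb i n) with true by (symmetry; apply Nat.leb_le; lia).
  replace (Nat.leb (S i) n) with true by (symmetry; apply Nat.leb_le; lia).
  rewrite (pascal_step3 n i Hi). replace (n - i)%nat with (S (n - S i)) by lia.
  assert (0 < INR (S i)) by (apply lt_0_INR; lia).
  simpl pow. field. lra.
Qed.

(* Exponential tilting: the weights [e^(tk) P(B(n,p) = k)] are, up to the
   normalisation [mgf^n], the law of [B(n, tilted_prob p t)]. *)
Definition tilted_prob (p t : R) : R := p * exp t / ((1 - p) + p * exp t).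

Lemma tilted_prob_bounds p t : 0 < p < 1 -> 0 < tilted_prob p t < 1.
Proof.
  intros Hp. unfold tilted_prob. pose proof (exp_pos t).
  assert (0 < (1 - p) + p * exp t) by nra.
  split; [apply Rdiv_lt_0_compat; nra|].
  apply Rmult_lt_reg_r with ((1 - p) + p * exp t); [lra|].
  unfold Rdiv. rewrite Rmult_assoc, Rinv_l; lra.
Qed.

Lemma exp_INR_mul k t : exp (INR k * t) = exp t ^ k.
Proof.
  induction k as [|k IH]; [simpl; rewrite Rmult_0_l; apply exp_0|].
  rewrite S_INR, Rmult_plus_distr_r, Rmult_1_l, exp_plus, IH. simpl. ring.
Qed.

Lemma binom_pmf_tilt n p t k : 0 < p < 1 ->
  exp (INR k * t) * binom_pmf n p k
  = ((1 - p) + p * exp t) ^ n * binom_pmf n (tilted_prob p t) k.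
Proof.
  intros Hp. unfold tilted_prob, binom_pmf. rewrite exp_INR_mul.
  set (s := (1 - p) + p * exp t).
  assert (Hs : 0 < s) by (unfold s; pose proof (exp_pos t); nra).
  destruct (Nat.leb k n) eqn:Hk; [apply Nat.leb_le in Hk|ring].
  replace (1 - p * exp t / s) with ((1 - p) / s) by (unfold s in *; field; lra).
  replace (s ^ n) with (s ^ k * s ^ (n - k)) by (rewrite <- pow_add; f_equal; lia).
  unfold Rdiv. rewrite !Rpow_mult_distr, !pow_inv.
  assert (0 < s ^ k) by (apply pow_lt; lra).
  assert (0 < s ^ (n - k)) by (apply pow_lt; lra).
  field. lra.
Qed.

Lemma sum_f_R0_ge_window (f : nat -> R) c lo hi m : 0 <= c -> (forall j, 0 <= f j) ->
  (forall j, (lo <= j <= hi)%nat -> c <= f j) ->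
  INR (Nat.min hi m + 1 - lo) * c <= sum_f_R0 f m.
Proof.
  intros Hc Hf Hwin. induction m as [|m IH].
  - simpl. destruct lo as [|lo].
    + replace (Nat.min hi 0 + 1 - 0)%nat with 1%nat by lia.
      rewrite Rmult_1_l. apply Hwin. lia.
    + replace (Nat.min hi 0 + 1 - S lo)%nat with 0%nat by lia.
      simpl. rewrite Rmult_0_l. apply Hf.
  - simpl sum_f_R0. pose proof (Hf (S m)).
    destruct (le_lt_dec lo (S m)); [destruct (le_lt_dec (S m) hi)|].
    + replace (Nat.min hi (S m) + 1 - lo)%nat with (S (Nat.min hi m + 1 - lo)) by lia.
      rewrite S_INR. assert (c <= f (S m)) by (apply Hwin; lia). lra.
    + replace (Nat.min hi (S m) + 1 - lo)%nat with (Nat.min hi m + 1 - lo)%nat by lia. lra.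
    + replace (Nat.min hi (S m) + 1 - lo)%nat with (Nat.min hi m + 1 - lo)%nat by lia. lra.
Qed.

Lemma ratio_chain_lower_bound (a : nat -> R) x k L : 0 <= x <= 1 -> (L <= k)%nat ->
  (forall j, 0 <= a j) ->
  (forall i, (k - L <= i < k)%nat -> (1 - x) * a (S i) <= a i) ->
  forall m, (m <= L)%nat -> (1 - INR m * x) * a k <= a (k - m)%nat.
Proof.
  intros Hx HLk Ha Hstep. induction m as [|m IH]; intros Hm.
  - simpl. rewrite Nat.sub_0_r. lra.
  - pose proof (Hstep (k - S m)%nat ltac:(lia)) as Hs.
    replace (S (k - S m)) with (k - m)%nat in Hs by lia.
    specialize (IH ltac:(lia)). rewrite S_INR.
    pose proof (Ha k). pose proof (pos_INR m).
    assert (0 <= INR m * x * x * a k)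
      by (apply Rmult_le_pos; [apply Rmult_le_pos; [apply Rmult_le_pos|]|]; lra).
    assert ((1 - x) * ((1 - INR m * x) * a k) <= (1 - x) * a (k - m)%nat)
      by (apply Rmult_le_compat_l; lra).
    nra.
Qed.

Lemma exists_nat_floor y : 0 <= y -> exists L : nat, INR L <= y < INR L + 1.
Proof.
  intros Hy. destruct (base_Int_part y) as [H1 H2].
  assert (Hz : (0 <= Int_part y)%Z).
  { assert (Hlt : -1 < IZR (Int_part y)) by lra. apply lt_IZR in Hlt. lia. }
  exists (Z.to_nat (Int_part y)). rewrite INR_IZR_INZ, Z2Nat.id by exact Hz. lra.
Qed.

Lemma binom_pmf_step_ge n r L i : 0 < r < 1 -> 0 <= L <= INR n * r * (1 - r) ->
  (i < n)%nat -> INR n * r - L <= INR i ->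
  (1 - L / (INR n * r * (1 - r))) * binom_pmf n r (S i) <= binom_pmf n r i.
Proof.
  intros Hr HL Hi Hii. set (v := INR n * r * (1 - r)) in *.
  assert (Hv : 0 < v).
  { assert (1 <= INR n) by (apply (le_INR 1); lia). unfold v.
    apply Rmult_lt_0_compat; [apply Rmult_lt_0_compat|]; lra. }
  set (x := L / v).
  assert (Hxv : x * v = L) by (unfold x; field; lra).
  assert (Hx : 0 <= x <= 1).
  { split; [unfold x; apply Rmult_le_pos; [lra|left; apply Rinv_0_lt_compat; lra]|nra]. }
  pose proof (binom_pmf_succ_ratio n r i Hi) as Hratio.
  rewrite minus_INR, S_INR in Hratio by lia.
  assert (Hni : 0 < (INR n - INR i) * r)
    by (apply Rmult_lt_0_compat; [apply lt_INR in Hi|]; lra).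
  apply Rmult_le_reg_r with ((INR n - INR i) * r); [exact Hni|]. rewrite Hratio.
  assert (Hk : (1 - x) * ((INR n - INR i) * r) <= (INR i + 1) * (1 - r)).
  { assert ((1 - x) * ((INR n - INR i) * r)
            <= (1 - x) * ((INR n - (INR n * r - L)) * r))
      by (apply Rmult_le_compat_l; [|apply Rmult_le_compat_r]; lra).
    assert ((INR n * r - L) * (1 - r) <= (INR i + 1) * (1 - r))
      by (apply Rmult_le_compat_r; lra).
    assert (0 <= x * L * r) by (apply Rmult_le_pos; [apply Rmult_le_pos|]; lra).
    assert ((1 - x) * ((INR n - (INR n * r - L)) * r) = v + L * r - L - x * L * r)
      by (rewrite <- Hxv; unfold v; ring).
    assert ((INR n * r - L) * (1 - r) = v - L * (1 - r)) by (unfold v; ring).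
    lra. }
  pose proof (binom_pmf_nonneg n r (S i) ltac:(lra)). nra.
Qed.

(* Each of the [L + 1 > sd/2] values just below [k] carries at least [3/4] of
   [P(B = k)], and the total mass is [1]. *)
Lemma binom_pmf_le_above_mean n r k : 0 < r < 1 -> 4 <= INR n * r * (1 - r) ->
  (k <= n)%nat -> INR n * r <= INR k ->
  binom_pmf n r k <= 3 / sqrt (INR n * r * (1 - r)).
Proof.
  intros Hr Hv Hk Hkr. set (v := INR n * r * (1 - r)) in *. set (sd := sqrt v).
  assert (Hsd2 : sd * sd = v) by (apply sqrt_sqrt; lra).
  assert (Hsd : 2 <= sd).
  { unfold sd. rewrite <- (sqrt_square 2) by lra. apply sqrt_le_1_alt; lra. }
  destruct (exists_nat_floor (sd / 2)) as [L [HL1 HL2]]; [lra|].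
  set (a := binom_pmf n r).
  assert (Ha : forall j, 0 <= a j) by (intro; apply binom_pmf_nonneg; lra).
  assert (HL0 : 0 <= INR L) by apply pos_INR.
  assert (Hvnr : v <= INR n * r).
  { unfold v. assert (0 <= INR n * r) by (apply Rmult_le_pos; [apply pos_INR|lra]). nra. }
  assert (HLk : (L <= k)%nat) by (apply INR_le; nra).
  set (x := INR L / v).
  assert (HLx : INR L * x <= 1 / 4).
  { unfold x, Rdiv. rewrite <- Rmult_assoc.
    apply Rmult_le_reg_r with v; [lra|]. rewrite Rmult_assoc, Rinv_l by lra. nra. }
  assert (Hx : 0 <= x <= 1 / 4).
  { split; [unfold x; apply Rmult_le_pos; [lra|left; apply Rinv_0_lt_compat; lra]|].
    destruct (Nat.eq_dec L 0) as [->|HL]; [unfold x; simpl; lra|].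
    assert (1 <= INR L) by (apply (le_INR 1); lia). nra. }
  assert (Hwin : forall j, (k - L <= j <= k)%nat -> 3 / 4 * a k <= a j).
  { intros j Hj.
    assert (Hstep : forall i, (k - L <= i < k)%nat -> (1 - x) * a (S i) <= a i).
    { intros i Hi. apply binom_pmf_step_ge; [lra|fold v; split; nra|lia|].
      assert (INR (k - L) <= INR i) by (apply le_INR; lia).
      rewrite minus_INR in * by lia. lra. }
    pose proof (ratio_chain_lower_bound a x k L ltac:(lra) HLk Ha Hstep (k - j)%nat
                  ltac:(lia)) as Hchain.
    replace (k - (k - j))%nat with j in Hchain by lia.
    assert (INR (k - j) * x <= 1 / 4).
    { assert (INR (k - j) <= INR L) by (apply le_INR; lia). nra. }
    pose proof (Ha k). nra. }
  pose proof (sum_f_R0_ge_window a (3 / 4 * a k) (k - L) k n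
                ltac:(pose proof (Ha k); lra) Ha Hwin) as Hsum.
  replace (Nat.min k n + 1 - (k - L))%nat with (S L) in Hsum by lia.
  unfold a in Hsum. rewrite binom_pmf_sum, S_INR in Hsum. fold a in Hsum.
  fold a sd. apply Rmult_le_reg_r with sd; [lra|].
  unfold Rdiv. rewrite Rmult_assoc, Rinv_l, Rmult_1_r by lra.
  pose proof (Ha k). nra.
Qed.

Lemma binom_pmf_le n r k : 0 < r < 1 -> 4 <= INR n * r * (1 - r) ->
  binom_pmf n r k <= 3 / sqrt (INR n * r * (1 - r)).
Proof.
  intros Hr Hv.
  assert (0 < 3 / sqrt (INR n * r * (1 - r)))
    by (apply Rdiv_lt_0_compat; [|apply sqrt_lt_R0]; lra).
  destruct (le_lt_dec k n) as [Hk|Hk].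
  2:{ unfold binom_pmf. replace (Nat.leb k n) with false
        by (symmetry; apply Nat.leb_gt; lia). lra. }
  destruct (Rle_lt_dec (INR n * r) (INR k)).
  - apply binom_pmf_le_above_mean; assumption.
  - rewrite binom_pmf_sym by exact Hk.
    replace (INR n * r * (1 - r)) with (INR n * (1 - r) * (1 - (1 - r))) by ring.
    apply binom_pmf_le_above_mean; [lra|lra|lia|]. rewrite minus_INR by exact Hk. lra.
Qed.

Lemma sum_f_R0_indicator_INR_zero (x : R) (f : nat -> R) n :
  (forall k, (k <= n)%nat -> INR k <> x) ->
  sum_f_R0 (fun k => if Req_EM_T (INR k) x then f k else 0) n = 0.
Proof.
  induction n as [|n IH]; intros H; cbn [sum_f_R0].
  - destruct (Req_EM_T (INR 0) x) as [e|]; [exfalso; exact (H 0%nat (le_n 0) e)|reflexivity].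
  - rewrite IH by (intros; apply H; lia).
    destruct (Req_EM_T (INR (S n)) x) as [e|]; [exfalso; exact (H (S n) (le_n _) e)|ring].
Qed.

(* At most one index [k] has [INR k = x]. *)
Lemma sum_f_R0_indicator_INR_le (x : R) (f : nat -> R) B n :
  (forall k, 0 <= f k <= B) -> 0 <= B ->
  sum_f_R0 (fun k => if Req_EM_T (INR k) x then f k else 0) n <= B.
Proof.
  intros Hf HB. induction n as [|n IH]; cbn [sum_f_R0].
  - destruct (Req_EM_T (INR 0) x); [apply Hf|lra].
  - destruct (Req_EM_T (INR (S n)) x) as [e|]; [|lra].
    rewrite sum_f_R0_indicator_INR_zero.
    + pose proof (Hf (S n)). lra.
    + intros k Hk E. rewrite <- e in E. apply INR_eq in E. lia.
Qed.

Lemma binom_pmf_tilt_diagonal n1 n2 p t c k j : 0 < p < 1 -> INR k = INR j + c ->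
  binom_pmf n1 p k * binom_pmf n2 p j
  = ((1 - p) + p * exp t) ^ n1 * ((1 - p) + p * exp (- t)) ^ n2 * exp (- (t * c))
    * (binom_pmf n1 (tilted_prob p t) k * binom_pmf n2 (tilted_prob p (- t)) j).
Proof.
  intros Hp Hkj.
  transitivity (exp (- (t * c)) * ((((1 - p) + p * exp t) ^ n1 * binom_pmf n1 (tilted_prob p t) k)
                * (((1 - p) + p * exp (- t)) ^ n2 * binom_pmf n2 (tilted_prob p (- t)) j)));
    [|ring].
  rewrite <- (binom_pmf_tilt n1 p t k Hp), <- (binom_pmf_tilt n2 p (- t) j Hp).
  transitivity (exp (- (t * c) + (INR k * t + INR j * - t))
                * (binom_pmf n1 p k * binom_pmf n2 p j)).
  - replace (- (t * c) + (INR k * t + INR j * - t)) with 0 by (rewrite Hkj; ring).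
    rewrite exp_0. ring.
  - rewrite !exp_plus. ring.
Qed.

Lemma prob_diff_eq_le_tilted n1 n2 p c t B : 0 < p < 1 ->
  (forall k, binom_pmf n1 (tilted_prob p t) k <= B) ->
  prob_diff_eq n1 n2 p c
  <= ((1 - p) + p * exp t) ^ n1 * ((1 - p) + p * exp (- t)) ^ n2 * exp (- (t * c)) * B.
Proof.
  intros Hp HB.
  set (K := ((1 - p) + p * exp t) ^ n1 * ((1 - p) + p * exp (- t)) ^ n2 * exp (- (t * c))).
  assert (HK : 0 <= K).
  { unfold K. pose proof (exp_pos t). pose proof (exp_pos (- t)).
    pose proof (exp_pos (- (t * c))).
    apply Rmult_le_pos; [apply Rmult_le_pos; apply pow_le|]; nra. }
  set (p1 := tilted_prob p t) in *. set (p2 := tilted_prob p (- t)).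
  pose proof (tilted_prob_bounds p t Hp) as Hp1.
  pose proof (tilted_prob_bounds p (- t) Hp) as Hp2. fold p1 p2 in Hp1, Hp2.
  assert (HB0 : 0 <= B)
    by (apply Rle_trans with (binom_pmf n1 p1 0); [apply binom_pmf_nonneg; lra|apply HB]).
  unfold prob_diff_eq.
  apply Rle_trans with (sum_f_R0 (fun j => binom_pmf n2 p2 j * (K * B)) n2).
  - apply sum_Rle. intros j _.
    rewrite (sum_eq _ (fun k => (if Req_EM_T (INR k) (INR j + c)
               then binom_pmf n1 p1 k * binom_pmf n2 p2 j else 0) * K)).
    + rewrite <- scal_sum.
      apply Rle_trans with (K * (B * binom_pmf n2 p2 j)); [|right; ring].
      apply Rmult_le_compat_l; [exact HK|].
      pose proof (binom_pmf_nonneg n2 p2 j ltac:(lra)).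
      apply sum_f_R0_indicator_INR_le; [|nra].
      intros k. pose proof (binom_pmf_nonneg n1 p1 k ltac:(lra)). specialize (HB k).
      split; nra.
    + intros k _. destruct (Req_EM_T (INR k) (INR j + c)) as [e|]; [|ring].
      rewrite (binom_pmf_tilt_diagonal n1 n2 p t c k j Hp e). fold K p1 p2. ring.
  - rewrite <- scal_sum, binom_pmf_sum. lra.
Qed.

Lemma tilted_prob_var_ge p t : 0 < p < 1 -> 0 <= t <= 1 ->
  p * (1 - p) <= 3 * (tilted_prob p t * (1 - tilted_prob p t)).
Proof.
  intros Hp Ht. unfold tilted_prob. set (s := (1 - p) + p * exp t).
  assert (Het : exp t <= 3).
  { pose proof exp_le_3. destruct (Req_dec t 1) as [->|]; [lra|].
    pose proof (exp_increasing t 1). lra. }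
  pose proof (exp_ineq1_le t).
  assert (Hs : 0 < s <= exp t) by (unfold s; nra).
  replace (p * exp t / s * (1 - p * exp t / s)) with (p * (1 - p) * exp t / (s * s))
    by (unfold s in *; field; lra).
  apply Rmult_le_reg_r with (s * s); [nra|].
  replace (3 * (p * (1 - p) * exp t / (s * s)) * (s * s)) with (3 * (p * (1 - p) * exp t))
    by (field; lra).
  assert (s * s <= 3 * exp t) by nra.
  assert (0 < p * (1 - p)) by nra. nra.
Qed.

Lemma binom_pmf_tilted_le n p t k : 0 < p < 1 -> 0 <= t <= 1 ->
  12 <= INR n * p * (1 - p) ->
  binom_pmf n (tilted_prob p t) k <= 6 / sqrt (INR n * p * (1 - p)).
Proof.
  intros Hp Ht Hn. set (q := tilted_prob p t).
  pose proof (tilted_prob_bounds p t Hp) as Hq. fold q in Hq.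
  pose proof (tilted_prob_var_ge p t Hp Ht) as Hvar. fold q in Hvar.
  pose proof (pos_INR n).
  assert (Hvq : 4 <= INR n * q * (1 - q)) by nra.
  apply Rle_trans with (3 / sqrt (INR n * q * (1 - q))); [apply binom_pmf_le; assumption|].
  assert (Q1 : 0 < sqrt (INR n * q * (1 - q))) by (apply sqrt_lt_R0; lra).
  assert (Q2 : 0 < sqrt (INR n * p * (1 - p))) by (apply sqrt_lt_R0; lra).
  assert (Q3 : sqrt (INR n * p * (1 - p)) <= 2 * sqrt (INR n * q * (1 - q))).
  { rewrite <- (sqrt_square 2) at 1 by lra. rewrite <- sqrt_mult by nra.
    apply sqrt_le_1_alt. nra. }
  unfold Rdiv. apply Rmult_le_reg_r with (sqrt (INR n * q * (1 - q)) * sqrt (INR n * p * (1 - p)));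
    [nra|].
  replace (3 * / sqrt (INR n * q * (1 - q))
             * (sqrt (INR n * q * (1 - q)) * sqrt (INR n * p * (1 - p))))
    with (3 * sqrt (INR n * p * (1 - p))) by (field; lra).
  replace (6 * / sqrt (INR n * p * (1 - p))
             * (sqrt (INR n * q * (1 - q)) * sqrt (INR n * p * (1 - p))))
    with (6 * sqrt (INR n * q * (1 - q))) by (field; lra).
  lra.
Qed.

(* With [V = p(1-p)(2N-T)] the optimal tilt is [t = 2pS/V]; the Gaussian part of the
   exponent is [-2 p^2 S^2 / V], the cubic mgf error contributes [8 (pS)^3 / V^2]. *)
Lemma tilted_mgf_product_le (N n1 n2 : nat) p S T : 0 < p < 1 ->
  INR n1 = INR N - S -> INR n2 = INR N + S - T -> 0 < 2 * INR N - T ->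
  let t := 2 * p * S / (p * (1 - p) * (2 * INR N - T)) in
  0 <= t <= 1 ->
  ((1 - p) + p * exp t) ^ n1 * ((1 - p) + p * exp (- t)) ^ n2 * exp (- (t * (p * T)))
  <= exp (- (2 * p * S ^ 2) / ((1 - p) * (2 * INR N - T))
          + 8 * (p * S) ^ 3 / (p * (1 - p) * (2 * INR N - T)) ^ 2).
Proof.
  intros Hp Hn1 Hn2 HW t Ht. set (a := p * (1 - p) * (t ^ 2 / 2 + t ^ 3)).
  assert (M1 : ((1 - p) + p * exp t) ^ n1 <= exp (INR n1 * (p * t + a))).
  { rewrite exp_INR_mul. apply pow_incr. pose proof (exp_pos t).
    split; [nra|apply bernoulli_mgf_le; lra]. }
  assert (M2 : ((1 - p) + p * exp (- t)) ^ n2 <= exp (INR n2 * (- (p * t) + a))).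
  { rewrite exp_INR_mul. apply pow_incr. pose proof (exp_pos (- t)).
    split; [nra|apply bernoulli_mgf_opp_le; lra]. }
  replace (- (2 * p * S ^ 2) / ((1 - p) * (2 * INR N - T))
           + 8 * (p * S) ^ 3 / (p * (1 - p) * (2 * INR N - T)) ^ 2)
    with (INR n1 * (p * t + a) + INR n2 * (- (p * t) + a) + - (t * (p * T)))
    by (rewrite Hn1, Hn2; unfold a, t; field; repeat split; lra).
  rewrite !exp_plus. pose proof (exp_pos (- (t * (p * T)))).
  apply Rmult_le_compat_r; [lra|].
  apply Rmult_le_compat; [apply pow_le; pose proof (exp_pos t); nra
                         |apply pow_le; pose proof (exp_pos (- t)); nra|exact M1|exact M2].
Qed.

Lemma prob_diff_eq_chernoff (N n1 n2 : nat) p S T : 0 < p < 1 ->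
  INR n1 = INR N - S -> INR n2 = INR N + S - T -> 0 < 2 * INR N - T -> 0 <= S ->
  2 * p * S <= p * (1 - p) * (2 * INR N - T) -> 12 <= INR n1 * p * (1 - p) ->
  prob_diff_eq n1 n2 p (p * T)
  <= exp (- (2 * p * S ^ 2) / ((1 - p) * (2 * INR N - T))
          + 8 * (p * S) ^ 3 / (p * (1 - p) * (2 * INR N - T)) ^ 2)
     * (6 / sqrt (INR n1 * p * (1 - p))).
Proof.
  intros Hp Hn1 Hn2 HW HS Hsmall Hvar.
  set (t := 2 * p * S / (p * (1 - p) * (2 * INR N - T))).
  assert (HV : 0 < p * (1 - p) * (2 * INR N - T)) by (apply Rmult_lt_0_compat; nra).
  assert (Ht : 0 <= t <= 1).
  { unfold t. split; [apply Rmult_le_pos; [nra|left; apply Rinv_0_lt_compat; lra]|].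
    apply Rmult_le_reg_r with (p * (1 - p) * (2 * INR N - T)); [lra|].
    unfold Rdiv. rewrite Rmult_assoc, Rinv_l; lra. }
  eapply Rle_trans.
  - apply (prob_diff_eq_le_tilted n1 n2 p (p * T) t); [exact Hp|].
    intros k. apply binom_pmf_tilted_le; assumption.
  - apply Rmult_le_compat_r.
    + apply Rlt_le, Rdiv_lt_0_compat; [lra|apply sqrt_lt_R0; lra].
    + exact (tilted_mgf_product_le N n1 n2 p S T Hp Hn1 Hn2 HW Ht).
Qed.

Lemma Rpower_two_thirds_cube v : 0 < v -> Rpower v (2 / 3) ^ 3 = v ^ 2.
Proof.
  intros Hv. rewrite <- Rpower_pow by apply exp_pos.
  rewrite Rpower_mult, <- Rpower_pow by exact Hv. f_equal. simpl. field.
Qed.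

(* With [R = v^(2/3)] one has [R^3 = v^2], so [8 x^3 / V^2 = 8 (x/R)^3 (v/V)^2]. *)
Lemma cubic_error_small x v V d : 0 < v <= V -> d <= 1 ->
  Rabs (x / Rpower v (2 / 3)) < d -> Rabs (8 * x ^ 3 / V ^ 2) < 8 * d.
Proof.
  intros Hv Hd Hu. set (R := Rpower v (2 / 3)) in *. set (u := x / R) in *.
  assert (HR : 0 < R) by apply exp_pos.
  replace (8 * x ^ 3 / V ^ 2) with (8 * u ^ 3 * (v / V) ^ 2).
  2:{ pose proof (Rpower_two_thirds_cube v ltac:(lra)) as HR3. fold R in HR3.
      replace ((v / V) ^ 2) with (R ^ 3 / V ^ 2) by (rewrite HR3; field; lra).
      unfold u. field. lra. }
  assert (Hw : 0 < v / V <= 1).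
  { split; [apply Rdiv_lt_0_compat; lra|].
    apply Rmult_le_reg_r with V; [lra|]. unfold Rdiv. rewrite Rmult_assoc, Rinv_l; lra. }
  rewrite !Rabs_mult, <- !RPow_abs, (Rabs_right 8), (Rabs_right (v / V)) by lra.
  pose proof (Rabs_pos u).
  assert (Rabs u * Rabs u <= 1) by nra.
  assert (Rabs u ^ 3 <= Rabs u) by (simpl; nra).
  assert (0 <= (v / V) ^ 2 <= 1) by (split; [apply pow_le|simpl]; nra).
  assert (0 <= Rabs u ^ 3) by (apply pow_le; lra).
  nra.
Qed.

Lemma var_pos_bounds (N : nat) p : 0 <= p <= 1 -> 0 < p * (1 - p) * INR N ->
  0 < p < 1 /\ 0 < INR N.
Proof.
  intros Hp Hv. pose proof (pos_INR N).
  destruct (Req_dec p 0) as [->|]; [lra|].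
  destruct (Req_dec p 1) as [->|]; [lra|].
  destruct (Req_dec (INR N) 0) as [E|]; [rewrite E in Hv; lra|].
  lra.
Qed.

Lemma Rabs_div_lt_half x (N : nat) : 0 < INR N -> Rabs (x / INR N) < 1 / 2 ->
  - (INR N / 2) < x < INR N / 2.
Proof.
  intros HN Hx. unfold Rdiv in Hx.
  rewrite Rabs_mult, Rabs_inv, (Rabs_right (INR N)) in Hx by lra.
  enough (Habs : Rabs x < INR N / 2) by (apply Rabs_def2 in Habs; lra).
  apply Rmult_lt_reg_r with (/ INR N); [apply Rinv_0_lt_compat; lra|].
  replace (INR N / 2 * / INR N) with (1 / 2) by (field; lra). exact Hx.
Qed.

Lemma cubic_error_cv0 (p S T : nat -> R) :
  (forall N, 0 <= p N <= 1) ->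
  cv_infty (fun N => p N * (1 - p N) * INR N) ->
  Un_cv (fun N => p N * S N / Rpower (p N * (1 - p N) * INR N) (2 / 3)) 0 ->
  Un_cv (fun N => T N / INR N) 0 ->
  Un_cv (fun N => 8 * (p N * S N) ^ 3 / (p N * (1 - p N) * (2 * INR N - T N)) ^ 2) 0.
Proof.
  intros hp hvar hS hT e He. set (d := Rmin 1 (e / 8)).
  destruct (hS d) as [N1 H1]; [apply Rmin_glb_lt; lra|].
  destruct (hvar 0) as [N2 H2]. destruct (hT (1 / 2)) as [N3 H3]; [lra|].
  exists (Nat.max N1 (Nat.max N2 N3)). intros N HNge.
  specialize (H1 N ltac:(lia)). specialize (H2 N ltac:(lia)). specialize (H3 N ltac:(lia)).
  unfold R_dist in *. rewrite Rminus_0_r in *.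
  destruct (var_pos_bounds N (p N) (hp N) H2) as [Hp HN].
  pose proof (Rabs_div_lt_half (T N) N HN H3).
  assert (8 * d <= e) by (pose proof (Rmin_r 1 (e / 8)); unfold d; lra).
  enough (Rabs (8 * (p N * S N) ^ 3 / (p N * (1 - p N) * (2 * INR N - T N)) ^ 2) < 8 * d)
    by lra.
  apply (cubic_error_small _ (p N * (1 - p N) * INR N)); [|apply Rmin_l|exact H1].
  split; [exact H2|]. apply Rmult_le_compat_l; [nra|lra].
Qed.

(* [sd(Z1)] is comparable to [sqrt v], so [pS >= 100 sqrt v] makes the local factor
   [6 / sd(Z1)] smaller than the Gaussian prefactor [S / (2 pi (1-p) N)]. *)
Lemma chernoff_prefactor_le (N n1 : nat) p S : 0 < p < 1 -> 0 < INR N ->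
  let v := p * (1 - p) * INR N in
  0 < v -> 3 * v / 4 <= INR n1 * p * (1 - p) -> 100 * sqrt v < p * S ->
  6 / sqrt (INR n1 * p * (1 - p)) <= S / (2 * PI * (1 - p) * INR N).
Proof.
  intros Hp HN v Hv Hn1 HpS.
  assert (Hsv2 : sqrt v * sqrt v = v) by (apply sqrt_sqrt; lra).
  pose proof (sqrt_lt_R0 v Hv).
  set (b := sqrt (INR n1 * p * (1 - p))).
  assert (Hb : 0 < b) by (apply sqrt_lt_R0; nra).
  assert (Hb2 : b * b = INR n1 * p * (1 - p)) by (apply sqrt_sqrt; nra).
  assert (Hvb : sqrt v <= 2 * b) by nra.
  pose proof PI_RGT_0. pose proof PI_4.
  assert (0 < 2 * PI * (1 - p) * INR N) by (apply Rmult_lt_0_compat; [nra|lra]).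
  apply Rmult_le_reg_r with (b * (2 * PI * (1 - p) * INR N) * p);
    [apply Rmult_lt_0_compat; [apply Rmult_lt_0_compat|]; lra|].
  replace (6 / b * (b * (2 * PI * (1 - p) * INR N) * p)) with (12 * PI * v)
    by (unfold v; field; lra).
  replace (S / (2 * PI * (1 - p) * INR N) * (b * (2 * PI * (1 - p) * INR N) * p))
    with (p * S * b) by (field; lra).
  assert (50 * v <= p * S * b) by (rewrite <- Hsv2; nra).
  nra.
Qed.

Lemma prob_diff_eq_lt_bound (N n1 n2 : nat) p S T : 0 <= p <= 1 ->
  INR n1 = INR N - S -> INR n2 = INR N + S - T ->
  100 < p * (1 - p) * INR N ->
  100 < p * S / sqrt (p * (1 - p) * INR N) ->
  p * S / Rpower (p * (1 - p) * INR N) (2 / 3) < 1 / 4 ->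
  - (INR N / 2) < T < INR N / 2 ->
  prob_diff_eq n1 n2 p (p * T)
  < S / (2 * PI * (1 - p) * INR N) *
      exp (- (2 * p * S ^ 2) / ((1 - p) * (2 * INR N - T))
           + 8 * (p * S) ^ 3 / (p * (1 - p) * (2 * INR N - T)) ^ 2)
    + 3 / (PI * p * S) * exp (- (9 * p * S ^ 2) / (8 * (1 - p) * INR N)).
Proof.
  intros Hp Hn1 Hn2 Hv HS1 HS2 HT.
  destruct (var_pos_bounds N p Hp ltac:(lra)) as [Hp' HN].
  set (v := p * (1 - p) * INR N) in *.
  assert (Hsv : 0 < sqrt v) by (apply sqrt_lt_R0; lra).
  assert (HpS : 100 * sqrt v < p * S).
  { apply Rmult_lt_reg_r with (/ sqrt v); [apply Rinv_0_lt_compat; lra|].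
    rewrite Rmult_assoc, Rinv_r by lra. lra. }
  assert (HS : 0 < S) by nra.
  set (R := Rpower v (2 / 3)) in *.
  assert (HR : 0 < R) by apply exp_pos.
  assert (HRv : R <= v).
  { unfold R. rewrite <- (Rpower_1 v) at 2 by lra. apply Rle_Rpower; lra. }
  assert (HpSR : p * S < R / 4).
  { apply Rmult_lt_reg_r with (/ R); [apply Rinv_0_lt_compat; lra|].
    replace (R / 4 * / R) with (1 / 4) by (field; lra). exact HS2. }
  assert (HSN : S < (1 - p) * INR N / 4)
    by (apply Rmult_lt_reg_l with p; [lra|]; unfold v in HRv; nra).
  assert (Hn1var : 3 * v / 4 <= INR n1 * p * (1 - p))
    by (rewrite Hn1; unfold v; assert (0 < p * (1 - p)) by nra; nra).
  assert (Hsmall : 2 * p * S <= p * (1 - p) * (2 * INR N - T)).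
  { assert (v <= p * (1 - p) * (2 * INR N - T)) by (apply Rmult_le_compat_l; nra).
    lra. }
  pose proof PI_RGT_0.
  assert (0 < 3 / (PI * p * S) * exp (- (9 * p * S ^ 2) / (8 * (1 - p) * INR N))).
  { apply Rmult_lt_0_compat; [|apply exp_pos]. apply Rdiv_lt_0_compat; [lra|].
    apply Rmult_lt_0_compat; [apply Rmult_lt_0_compat|]; lra. }
  enough (prob_diff_eq n1 n2 p (p * T) <= S / (2 * PI * (1 - p) * INR N) *
      exp (- (2 * p * S ^ 2) / ((1 - p) * (2 * INR N - T))
           + 8 * (p * S) ^ 3 / (p * (1 - p) * (2 * INR N - T)) ^ 2)) by lra.
  eapply Rle_trans; [apply (prob_diff_eq_chernoff N n1 n2 p S T); lra|].
  rewrite Rmult_comm. apply Rmult_le_compat_r; [left; apply exp_pos|].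
  apply (chernoff_prefactor_le N n1 p S); fold v; lra.
Qed.

Theorem mainTheorem13
  (p S T : nat -> R) (n1 n2 : nat -> nat)
  (hp : forall N, 0 <= p N <= 1)
  (hn1 : forall N, INR (n1 N) = INR N - S N)
  (hn2 : forall N, INR (n2 N) = INR N + S N - T N)
  (hvar : cv_infty (fun N => p N * (1 - p N) * INR N))
  (hS1 : cv_infty (fun N => p N * S N / sqrt (p N * (1 - p N) * INR N)))
  (hS2 : Un_cv (fun N => p N * S N / Rpower (p N * (1 - p N) * INR N) (2 / 3)) 0)
  (hT : Un_cv (fun N => T N / INR N) 0) :
  exists eps : nat -> R, Un_cv eps 0 /\
  exists N0 : nat, forall N : nat, (N0 <= N)%nat ->
    prob_diff_eq (n1 N) (n2 N) (p N) (p N * T N) <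
      S N / (2 * PI * (1 - p N) * INR N) *
        exp (- (2 * p N * S N ^ 2) / ((1 - p N) * (2 * INR N - T N)) + eps N)
      + 3 / (PI * p N * S N) *
        exp (- (9 * p N * S N ^ 2) / (8 * (1 - p N) * INR N)).
Proof.
  exists (fun N => 8 * (p N * S N) ^ 3 / (p N * (1 - p N) * (2 * INR N - T N)) ^ 2).
  split; [exact (cubic_error_cv0 p S T hp hvar hS2 hT)|].
  destruct (hvar 100) as [N1 H1]. destruct (hS1 100) as [N2 H2].
  destruct (hS2 (1 / 4)) as [N3 H3]; [lra|]. destruct (hT (1 / 2)) as [N4 H4]; [lra|].
  exists (Nat.max (Nat.max N1 N2) (Nat.max N3 N4)). intros N HNge.
  specialize (H1 N ltac:(lia)). specialize (H2 N ltac:(lia)).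
  specialize (H3 N ltac:(lia)). specialize (H4 N ltac:(lia)).
  unfold R_dist in H3, H4. rewrite Rminus_0_r in H3, H4.
  destruct (var_pos_bounds N (p N) (hp N) ltac:(lra)) as [_ HN].
  apply (prob_diff_eq_lt_bound N); auto.
  - exact (Rle_lt_trans _ _ _ (Rle_abs _) H3).
  - exact (Rabs_div_lt_half (T N) N HN H4).
Qed.
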